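(* Let $b:\mathbb R\to\mathbb R$ be an arbitrary function (bottom topography), and let $x$ be a grid function with $x_s\neq0$ and $x_t+\check x_t\neq0$ at every node, satisfying at every node the modified scheme $$x_{t\check t}-\alpha^2x_{s\bar s}+\Big(\frac{1}{\hat x_s\check x_s}\Big)_{\bar s}-\frac{b_t+\check b_t}{x_t+\check x_t}=0,$$ where $b$ also denotes the grid function $b(x(t,s))$, so that $b_t+\check b_t=\big(b(\hat x)-b(\check x)\big)/\tau$. Then at every node the discrete energy conservation law $$\Big(x_t^2+x_s^{-1}+\hat x_s^{-1}+\alpha^2x_s\hat x_s-\hat b-b\Big)_{\check t}+\Big((x_t^++\check x_t^+)\big((\hat x_s\check x_s)^{-1}-\alpha^2x_s\big)\Big)_{\bar s}=0$$ holds.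
   Context: Fix mesh steps $\tau>0$, $h>0$ and a constant $\alpha\in\mathbb R$. A grid function is a real-valued function $f=f(t,s)$ on the uniform orthogonal mesh $\{(n\tau,kh): n,k\in\mathbb Z\}$. Shifts: $\hat f=f(t+\tau,s)$, $\check f=f(t-\tau,s)$, $f^+=f_+=f(t,s+h)$, $f^-=f_-=f(t,s-h)$; a shift applied to a composite expression shifts the whole expression (e.g. $\hat x_s$ is $x_s$ evaluated at $(t+\tau,s)$, $\check x_t$ is $x_t$ evaluated at $(t-\tau,s)$, $x_t^+$ is $x_t$ evaluated at $(t,s+h)$, $\check x_t^+$ is $x_t$ evaluated at $(t-\tau,s+h)$, $\hat b=b(\hat x)$). Differences: $f_t=(\hat f-f)/\tau$, $f_{\check t}=(f-\check f)/\tau$, $f_s=(f_+-f)/h$, $f_{\bar s}=(f-f_-)/h$; iterated differences compose, e.g. $x_{t\check t}=(x_t)_{\check t}=(\hat x-2x+\check x)/\tau^2$ and $x_{s\bar s}=(x_s)_{\bar s}=(x_+-2x+x_-)/h^2$. *)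

From Stdlib Require Import Reals ZArith.
Open Scope R_scope.

(* A grid function: value at node (n tau, k h). *)
Definition grid := Z -> Z -> R.

Definition hat (f : grid) : grid := fun n k => f (n + 1)%Z k.
Definition chk (f : grid) : grid := fun n k => f (n - 1)%Z k.
Definition splus (f : grid) : grid := fun n k => f n (k + 1)%Z.
Definition sminus (f : grid) : grid := fun n k => f n (k - 1)%Z.

Definition d_t (tau : R) (f : grid) : grid := fun n k => (hat f n k - f n k) / tau.
Definition d_tb (tau : R) (f : grid) : grid := fun n k => (f n k - chk f n k) / tau.
Definition d_s (h : R) (f : grid) : grid := fun n k => (splus f n k - f n k) / h.
Definition d_sb (h : R) (f : grid) : grid := fun n k => (f n k - sminus f n k) / h.

Definition compose_grid (b : R -> R) (x : grid) : grid := fun n k => b (x n k).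

Definition scheme (tau h alpha : R) (b : R -> R) (x : grid) : grid :=
  fun n k =>
    d_tb tau (d_t tau x) n k
    - alpha ^ 2 * d_sb h (d_s h x) n k
    + d_sb h (fun n' k' => / (hat (d_s h x) n' k' * chk (d_s h x) n' k')) n k
    - (d_t tau (compose_grid b x) n k + chk (d_t tau (compose_grid b x)) n k)
      / (d_t tau x n k + chk (d_t tau x) n k).

Definition energy (tau h alpha : R) (b : R -> R) (x : grid) : grid :=
  fun n k =>
    (d_t tau x n k) ^ 2 + / d_s h x n k + / hat (d_s h x) n k
    + alpha ^ 2 * d_s h x n k * hat (d_s h x) n k
    - hat (compose_grid b x) n k - compose_grid b x n k.

Definition flux (tau h alpha : R) (x : grid) : grid :=
  fun n k =>
    (splus (d_t tau x) n k + splus (chk (d_t tau x)) n k)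
    * (/ (hat (d_s h x) n k * chk (d_s h x) n k) - alpha ^ 2 * d_s h x n k).

From Stdlib Require Import Reals ZArith.
Open Scope R_scope.

(* Write w := x_t + x̌_t = (x̂ - x̌)/tau for the central velocity
   and G := (x̂_s x̌_s)^{-1} - alpha^2 x_s for the stress, so that the flux
   is exactly w^+ G.  The conservation law is then the scheme multiplied by
   w, read as an algebraic identity valid for EVERY grid function:
     energy_ť + flux_s̄ = w * scheme,
   provided x_s and w do not vanish.  It is assembled from elementary facts
   of discrete calculus, established first for arbitrary grid functions:
   - (f^2)_ť = (f + f̌) f_ť                      (kinetic energy, f = x_t);
   - (ĉ + c)_ť = c_t + č_t                      (bottom term, c = b(x));
   - space and time differences commute: w_s = (x̂_s - x̌_s)/tau, whence the
     elastic part of the energy has backward time difference - w_s G;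
   - the discrete Leibniz rule (w^+ G)_s̄ = w_s G + w G_s̄.
   Adding them, the terms w_s G cancel and w * scheme remains; the theorem
   follows because the scheme vanishes. *)

(* Central velocity w = x_t + x̌_t: the multiplier turning the scheme into
   a conservation law. *)
Definition central_velocity (tau : R) (x : grid) : grid :=
  fun n k => d_t tau x n k + chk (d_t tau x) n k.

(* Stress G = (x̂_s x̌_s)^{-1} - alpha^2 x_s, so that flux = w^+ G. *)
Definition stress (h alpha : R) (x : grid) : grid :=
  fun n k => / (hat (d_s h x) n k * chk (d_s h x) n k) - alpha ^ 2 * d_s h x n k.

Definition elastic_energy (h alpha : R) (x : grid) : grid :=
  fun n k => / d_s h x n k + / hat (d_s h x) n k
             + alpha ^ 2 * d_s h x n k * hat (d_s h x) n k.

Section DiscreteCalculus.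

Variables tau h : R.

Lemma d_tb_square (f : grid) (n k : Z) :
  d_tb tau (fun n' k' => f n' k' ^ 2) n k = (f n k + chk f n k) * d_tb tau f n k.
Proof. unfold d_tb, chk, Rdiv. ring. Qed.

Lemma d_tb_two_level (c : grid) (n k : Z) :
  d_tb tau (fun n' k' => hat c n' k' + c n' k') n k = d_t tau c n k + chk (d_t tau c) n k.
Proof.
  unfold d_tb, d_t, hat, chk. rewrite Z.sub_add. unfold Rdiv. ring.
Qed.

Lemma d_sb_leibniz (w g : grid) (n k : Z) :
  d_sb h (fun n' k' => splus w n' k' * g n' k') n k
  = d_s h w n k * g n k + w n k * d_sb h g n k.
Proof.
  unfold d_sb, d_s, splus, sminus. rewrite Z.sub_add. unfold Rdiv. ring.
Qed.

(* Space and time differences commute: w_s = (x̂_s - x̌_s)/tau. *)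
Lemma d_s_central_velocity (x : grid) (n k : Z) :
  d_s h (central_velocity tau x) n k = (hat (d_s h x) n k - chk (d_s h x) n k) / tau.
Proof.
  unfold central_velocity, d_s, d_t, hat, chk, splus. rewrite Z.sub_add. unfold Rdiv. ring.
Qed.

Lemma d_tb_elastic_energy (alpha : R) (x : grid) (n k : Z) :
  tau <> 0 ->
  d_s h x (n - 1)%Z k <> 0 -> d_s h x n k <> 0 -> d_s h x (n + 1)%Z k <> 0 ->
  d_tb tau (elastic_energy h alpha x) n k
  = - d_s h (central_velocity tau x) n k * stress h alpha x n k.
Proof.
  intros Htau Hprev Hcur Hnext.
  rewrite d_s_central_velocity.
  unfold d_tb, elastic_energy, stress, hat, chk.
  rewrite Z.sub_add. field. auto.
Qed.

End DiscreteCalculus.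

Section EnergyIdentity.

Variables (tau h alpha : R) (b : R -> R) (x : grid).

Hypothesis tau_neq0 : tau <> 0.
Hypothesis slope_neq0 : forall n k : Z, d_s h x n k <> 0.

Let w : grid := central_velocity tau x.
Let G : grid := stress h alpha x.
Let c : grid := compose_grid b x.

Lemma energy_time_balance (n k : Z) :
  d_tb tau (energy tau h alpha b x) n k
  = w n k * d_tb tau (d_t tau x) n k - d_s h w n k * G n k
    - (d_t tau c n k + chk (d_t tau c) n k).
Proof.
  assert (Hsplit : d_tb tau (energy tau h alpha b x) n k
    = d_tb tau (fun n' k' => d_t tau x n' k' ^ 2) n k
      + d_tb tau (elastic_energy h alpha x) n k
      - d_tb tau (fun n' k' => hat c n' k' + c n' k') n k).
  { unfold d_tb, energy, elastic_energy, chk, c, Rdiv. ring. }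
  rewrite Hsplit, d_tb_square, d_tb_elastic_energy, d_tb_two_level by auto.
  unfold w, G, central_velocity. ring.
Qed.

Lemma velocity_times_scheme (n k : Z) :
  w n k <> 0 ->
  w n k * scheme tau h alpha b x n k
  = w n k * d_tb tau (d_t tau x) n k + w n k * d_sb h G n k
    - (d_t tau c n k + chk (d_t tau c) n k).
Proof.
  intros Hw.
  assert (HG : d_sb h G n k
    = d_sb h (fun n' k' => / (hat (d_s h x) n' k' * chk (d_s h x) n' k')) n k
      - alpha ^ 2 * d_sb h (d_s h x) n k).
  { unfold G, stress, d_sb, sminus, Rdiv. ring. }
  rewrite HG. unfold w, central_velocity in *. unfold scheme, c.
  field. exact Hw.
Qed.

Lemma energy_flux_identity (n k : Z) :
  w n k <> 0 ->
  d_tb tau (energy tau h alpha b x) n k + d_sb h (flux tau h alpha x) n k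
  = w n k * scheme tau h alpha b x n k.
Proof.
  intros Hw.
  change (flux tau h alpha x) with (fun n' k' => splus w n' k' * G n' k').
  rewrite energy_time_balance, d_sb_leibniz, velocity_times_scheme by exact Hw.
  ring.
Qed.

End EnergyIdentity.

Theorem mainTheorem9 (tau h alpha : R) (b : R -> R) (x : grid) :
  0 < tau -> 0 < h ->
  (forall n k : Z, d_s h x n k <> 0) ->
  (forall n k : Z, d_t tau x n k + chk (d_t tau x) n k <> 0) ->
  (forall n k : Z, scheme tau h alpha b x n k = 0) ->
  forall n k : Z,
    d_tb tau (energy tau h alpha b x) n k + d_sb h (flux tau h alpha x) n k = 0.
Proof.
  intros Htau _ Hslope Hw Hscheme n k.
  rewrite (energy_flux_identity tau h alpha b x (Rgt_not_eq _ _ Htau) Hslope n k (Hw n k)).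
  rewrite Hscheme. ring.
Qed.
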